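(* Let $p$ be an odd prime, $q$ a power of $p$, $E/\mathbb F_p$ a finite extension, $\psi$ a nontrivial additive character of $\mathbb F_p$, and $\tilde f(x)=\sum_{i=0}^na_ix^{(q^i+1)/2}$ with $a_i\in E$. Let $\mathbb K$ be the unique quadratic subfield of $\mathbb Q(\zeta_p)$ and $\mathrm{Gauss}_{\mathbb F_p}$ a quadratic Gauss sum over $\mathbb F_p$. Then the sums $$S_{\tilde f,+}=\frac{-1}{(\mathrm{Gauss}_{\mathbb F_p})^{\deg(E/\mathbb F_p)}}\sum_{x\in E}\psi_E(\tilde f(x)),\qquad S_{\tilde f,-}=\frac{-1}{(\mathrm{Gauss}_{\mathbb F_p})^{\deg(E/\mathbb F_p)}}\sum_{x\in E}\psi_E(\tilde f(x))\chi_2(x)$$ both lie in $\mathbb K$. If moreover $q$ is a square and $E\supseteq\mathbb F_q$, both lie in $\mathbb Q$.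
   Context: $\psi_E=\psi\circ\mathrm{Tr}_{E/\mathbb F_p}$, $\chi_2$ is the quadratic character of $E^\times$ (extended by $\chi_2(0)=0$), and $\mathrm{Gauss}_{\mathbb F_p}=\sum_{x\in\mathbb F_p^\times}\psi(x)\chi_2(x)$. *)

From HB Require Import structures.
From mathcomp Require Import all_boot all_order all_algebra all_field.
Set Implicit Arguments. Unset Strict Implicit. Unset Printing Implicit Defensive.
Import Order.TTheory GRing.Theory Num.Theory.
Local Open Scope ring_scope.

Definition fdeg (E : finFieldType) (p : nat) : nat := logn p #|E|.

Definition trE (E : finFieldType) (p : nat) (x : E) : E :=
  \sum_(i < fdeg E p) x ^+ (p ^ i).

(* The trace viewed in 'F_p : the k with k%:R = Tr(x) (it exists since the
   trace lies in the prime field when p is the characteristic). *)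
Definition trFp (E : finFieldType) (p : nat) (x : E) : 'F_p :=
  odflt 0 [pick k : 'F_p | (((k : nat)%:R : E) == trE p x)].

Definition psiE (E : finFieldType) (p : nat) (psi : 'F_p -> algC) (x : E) : algC :=
  psi (trFp p x).

Definition chi2 (F : finFieldType) (x : F) : algC :=
  if x == 0 then 0 else if [exists y : F, y ^+ 2 == x] then 1 else -1.

Definition gaussFp (p : nat) (psi : 'F_p -> algC) : algC :=
  \sum_(x : 'F_p | x != 0) psi x * chi2 x.

Definition nontriv_add_char (p : nat) (psi : 'F_p -> algC) : Prop :=
  (forall x y : 'F_p, psi (x + y) = psi x * psi y) /\ (exists x, psi x != 1).

(* The unique quadratic subfield of Q(zeta_p): Q(sqrt(pstar)),
   pstar = (-1)^((p-1)/2) p. *)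
Definition pstar (p : nat) : algC := (-1) ^+ (p.-1 %/ 2) * (p%:R).
Definition inQuadK (p : nat) (z : algC) : Prop :=
  exists a b : rat, z = ratr a + ratr b * sqrtC (pstar p).

Definition has_subfield_of_size (E : finFieldType) (q : nat) : Prop :=
  exists S : {set E}, [/\ #|S| = q, (0 : E) \in S, (1 : E) \in S,
    {in S &, forall x y, x + y \in S} /\ {in S, forall x, - x \in S} &
    {in S &, forall x y, x * y \in S}].

Definition ftilde (E : finFieldType) (q n : nat) (a : nat -> E) (x : E) : E :=
  \sum_(i < n.+1) a i * x ^+ ((q ^ i + 1) %/ 2).

Definition Splus (E : finFieldType) (p q n : nat) (a : nat -> E) (psi : 'F_p -> algC) : algC :=
  - (gaussFp psi ^+ fdeg E p)^-1 * \sum_(x : E) @psiE E p psi (@ftilde E q n a x).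

Definition Sminus (E : finFieldType) (p q n : nat) (a : nat -> E) (psi : 'F_p -> algC) : algC :=
  - (gaussFp psi ^+ fdeg E p)^-1 * \sum_(x : E) @psiE E p psi (@ftilde E q n a x) * chi2 x.

From HB Require Import structures.
From mathcomp Require Import all_boot all_order all_algebra all_field.
From mathcomp Require Import cyclic zify ring.
Set Implicit Arguments. Unset Strict Implicit. Unset Printing Implicit Defensive.
Import Order.TTheory GRing.Theory Num.Theory.
Local Open Scope ring_scope.

(* Group the points x of E by t = Tr(ftilde x) in F_p: each sum becomes
   sum_t psi(t) N(t) with rational weights N(t).  For d in F_p^*, since q is odd,
   (d^2)^((q^i+1)/2) = d^(q^i+1) = d^2, so x |-> d^2 x multiplies ftilde by d^2 and
   N(d^2 t) = N(t) (chi2 being invariant as well).  Hence N is constant on the two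
   square classes of F_p^*, and the sum is r0 + r1 G with G the Gauss sum.  Since
   G^2 = pstar, dividing by G^deg stays in Q + Q G = Q(sqrt pstar).
   If q = p^(2j) and F_q is inside E, every c in F_p^* satisfies c^((q^i+1)/2) = c
   and is a square in E (deg E is even), so N is constant on F_p^*, the sum is
   N(0) - N(1), and G^deg = pstar^(deg/2) is rational. *)

Lemma chi2_0 (F : finFieldType) : chi2 (0 : F) = 0.
Proof. by rewrite /chi2 eqxx. Qed.

Lemma chi2_rat (F : finFieldType) (x : F) : chi2 x \in Crat.
Proof.
by rewrite /chi2; case: ifP => _; [|case: ifP => _]; rewrite ?rpredN ?rpred0 ?rpred1.
Qed.

Lemma chi2_1 (F : finFieldType) : chi2 (1 : F) = 1.
Proof. by rewrite /chi2 oner_eq0; case: existsP => // [[]]; exists 1; rewrite expr1n. Qed.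

Lemma chi2_pm (F : finFieldType) (x : F) : x != 0 -> chi2 x = 1 \/ chi2 x = -1.
Proof. by move=> x0; rewrite /chi2 (negbTE x0); case: ifP; [left | right]. Qed.

Lemma chi2_eq1_sqr (F : finFieldType) (x : F) :
  chi2 x = 1 -> exists2 y, y != 0 & x = y ^+ 2.
Proof.
rewrite /chi2; have [->|x0] := eqVneq x 0.
  by move/esym/eqP; rewrite oner_eq0.
case: existsP => [[y /eqP yx] _ | _ /esym/eqP].
  by exists y; rewrite //; apply: contraNneq x0 => y0; rewrite -yx y0 expr0n.
by rewrite -subr_eq0 opprK -mulr2n pnatr_eq0.
Qed.

Lemma chi2_sqr (F : finFieldType) (x : F) : x != 0 -> chi2 x ^+ 2 = 1.
Proof. by case/chi2_pm => ->; rewrite ?sqrrN expr1n. Qed.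

Section QuadraticCharacter.
Variable F : finFieldType.
Hypothesis oddF : odd #|F|.

Let h := (#|F|.-1 %/ 2)%N.

Lemma expf_card_pred (x : F) : x != 0 -> x ^+ #|F|.-1 = 1.
Proof.
move=> x0; apply: (mulfI x0); rewrite mulr1 -exprS prednK ?expf_card //.
exact: ltnW (finNzRing_gt1 F).
Qed.

Lemma half_card_pred_double : (h * 2 = #|F|.-1)%N.
Proof.
rewrite divnK // dvdn2; move: oddF (finNzRing_gt1 F).
by case: #|F| => [|m] //= /negPn.
Qed.

Lemma half_card_pred_gt0 : (0 < h)%N.
Proof.
have := half_card_pred_double; have := finNzRing_gt1 F.
by move: h #|F| => m c; lia.
Qed.

Lemma exists_primitive_root : exists g : F, (#|F|.-1).-primitive_root g.
Proof.
pose rs := enum (predC1 (0 : F)).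
have [||| g _ gprim] := hasP (@has_prim_root F #|F|.-1 rs _ _ (enum_uniq _) _).
- by rewrite -half_card_pred_double muln_gt0 half_card_pred_gt0.
- by apply/allP => x; rewrite mem_enum => x0; rewrite unity_rootE expf_card_pred.
- by rewrite -cardE cardC1.
by exists g.
Qed.

Lemma primitive_root_expf_half (g : F) :
  (#|F|.-1).-primitive_root g -> g ^+ h = -1.
Proof.
move=> gprim; have : (g ^+ h) ^+ 2 == 1.
  by rewrite -exprM half_card_pred_double prim_expr_order.
rewrite sqrf_eq1 => /orP[|/eqP //].
rewrite -(prim_order_dvd gprim) -half_card_pred_double => /dvdn_leq.
by have := half_card_pred_gt0; lia.
Qed.

Lemma oppr1_neq1 : (-1 : F) != 1.
Proof.
have [g gprim] := exists_primitive_root.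
rewrite -(primitive_root_expf_half gprim) -(prim_order_dvd gprim).
rewrite -half_card_pred_double; apply/negP => /dvdn_leq.
by have := half_card_pred_gt0; lia.
Qed.

Lemma sqr_expf_half (y : F) : y != 0 -> (y ^+ 2) ^+ h = 1.
Proof. by move=> y0; rewrite -exprM mulnC half_card_pred_double expf_card_pred. Qed.

Lemma expf_half_eq1_sqr (z : F) : z != 0 -> z ^+ h = 1 -> exists y, y ^+ 2 = z.
Proof.
move=> z0 zh; have [g gprim] := exists_primitive_root.
have [[i /= _] zi] := prim_rootP gprim (expf_card_pred z0).
have : (#|F|.-1 %| i * h)%N by rewrite (prim_order_dvd gprim) exprM -zi zh.
rewrite -half_card_pred_double [(h * 2)%N]mulnC dvdn_pmul2r ?half_card_pred_gt0 //.
by case/dvdnP => j ij; exists (g ^+ j); rewrite -exprM zi ij.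
Qed.

Lemma chi2E (z : F) : z != 0 -> chi2 z = if z ^+ h == 1 then 1 else -1.
Proof.
move=> z0; rewrite /chi2 (negbTE z0); congr (if _ then _ else _).
apply/existsP/eqP => [[y /eqP yz] | /(expf_half_eq1_sqr z0) [y yz]].
  by rewrite -yz sqr_expf_half //; apply: contraNneq z0 => y0; rewrite -yz y0 expr0n.
by exists y; rewrite yz.
Qed.

Lemma chi2M (x y : F) : chi2 (x * y) = chi2 x * chi2 y.
Proof.
have [->|x0] := eqVneq x 0; first by rewrite mul0r chi2_0 mul0r.
have [->|y0] := eqVneq y 0; first by rewrite mulr0 chi2_0 mulr0.
have expf_half_pm (z : F) : z != 0 -> z ^+ h = 1 \/ z ^+ h = -1.
  move=> z0; have : (z ^+ h) ^+ 2 == 1.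
    by rewrite -exprM half_card_pred_double expf_card_pred.
  by rewrite sqrf_eq1 => /orP[] /eqP; [left | right].
rewrite !chi2E ?mulf_neq0 // exprMn.
have m1 := negbTE oppr1_neq1.
by case: (expf_half_pm x x0) => ->; case: (expf_half_pm y y0) => ->;
  rewrite ?mulrNN ?mulr1 ?mul1r ?eqxx ?m1 ?mulrNN ?mulr1 ?mul1r.
Qed.

Lemma chi2_sqrM (x y : F) : y != 0 -> chi2 (y ^+ 2 * x) = chi2 x.
Proof.
by move=> y0; rewrite chi2M chi2E ?expf_neq0 // sqr_expf_half // eqxx mul1r.
Qed.

Lemma exists_nonsquare : exists2 g : F, g != 0 & chi2 g = -1.
Proof.
have [g gprim] := exists_primitive_root.
have g0 : g != 0.
  apply/eqP => g0; have := primitive_root_expf_half gprim.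
  rewrite g0 expr0n gtn_eqF ?half_card_pred_gt0 // => /eqP.
  by rewrite eq_sym oppr_eq0 oner_eq0.
by exists g; rewrite // chi2E // primitive_root_expf_half // (negbTE oppr1_neq1).
Qed.

Lemma sum_chi2 : \sum_(t : F) chi2 t = 0.
Proof.
have [g g0 chi2g] := exists_nonsquare.
have e : \sum_(t : F) chi2 t = - \sum_(t : F) chi2 t.
  rewrite {1}(reindex_inj (mulfI g0)) /=.
  by under eq_bigr do rewrite chi2M; rewrite -mulr_sumr chi2g mulN1r.
have : 2%:R * \sum_(t : F) chi2 t = 0 by rewrite mulr2n mulrDl mul1r {1}e addNr.
by move/eqP; rewrite mulf_eq0 pnatr_eq0 => /eqP.
Qed.

Lemma chi2_eq_sqr_class (x y : F) : x != 0 -> y != 0 -> chi2 x = chi2 y ->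
  exists2 z, z != 0 & x = z ^+ 2 * y.
Proof.
move=> x0 y0 xy; have : chi2 (x * y) = 1.
  by rewrite chi2M xy -expr2 chi2_sqr.
case/chi2_eq1_sqr => w w0 xyw; exists (w / y); first by rewrite mulf_neq0 ?invr_eq0.
by rewrite expr_div_n -xyw; field.
Qed.

End QuadraticCharacter.

Section GaussSum.
Variables (p : nat) (psi : 'F_p -> algC).
Hypotheses (pr : prime p) (oddp : odd p).
Hypotheses (psiD : forall x y, psi (x + y) = psi x * psi y) (psi0 : psi 0 = 1).
Variable x0 : 'F_p.
Hypothesis psix0 : psi x0 != 1.

Let oddFp : odd #|'F_p|. Proof. by rewrite card_Fp. Qed.

Lemma sum_psi : \sum_t psi t = 0.
Proof.
have e : \sum_t psi t = psi x0 * \sum_t psi t.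
  rewrite mulr_sumr (reindex_inj (addrI x0)) /=.
  by apply: eq_bigr => t _; rewrite psiD.
have : (1 - psi x0) * \sum_t psi t = 0 by rewrite mulrBl mul1r -e subrr.
by move/eqP; rewrite mulf_eq0 subr_eq0 eq_sym (negbTE psix0) => /eqP.
Qed.

Lemma sum_psi_neq0 : \sum_(t | t != 0) psi t = -1.
Proof.
have := sum_psi; rewrite (bigD1 0) //= psi0 => /eqP.
by rewrite addrC addr_eq0 => /eqP.
Qed.

Lemma sum_psi_scale_neq0 (u : 'F_p) :
  \sum_(a | a != 0) psi (a * u) = (if u == 0 then p%:R else 0) - 1.
Proof.
have [->|u0] := eqVneq u 0; last first.
  rewrite /= add0r -sum_psi_neq0 [RHS](reindex_inj (mulIf u0)) /=.
  by apply: eq_bigl => a; rewrite mulf_eq0 negb_or u0 andbT.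
under eq_bigr do rewrite mulr0 psi0.
rewrite sumr_const (eq_card (B := predC1 0)) // cardC1 card_Fp //.
by rewrite -{2}(prednK (prime_gt0 pr)) -natr1 addrK.
Qed.

Lemma gaussFpE : gaussFp psi = \sum_x psi x * chi2 x.
Proof. by rewrite [RHS](bigD1 0) //= chi2_0 mulr0 add0r. Qed.

Lemma gaussFp_sqr : gaussFp psi ^+ 2 = pstar p.
Proof.
have twist (a : 'F_p) : a != 0 ->
    psi a * chi2 a * gaussFp psi = \sum_t chi2 t * psi (a * (1 + t)).
  move=> a0; rewrite gaussFpE (reindex_inj (mulfI a0)) /= mulr_sumr.
  apply: eq_bigr => t _; rewrite chi2M // mulrDr mulr1 psiD.
  by rewrite -[RHS]mul1r -(chi2_sqr a0) expr2; ring.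
rewrite expr2 {1}/gaussFp mulr_suml (eq_bigr _ twist) exchange_big /=.
under eq_bigr do rewrite -mulr_sumr sum_psi_scale_neq0 mulrBr mulr1.
rewrite sumrB sum_chi2 // subr0 (bigD1 (-1)) //= addrN eqxx big1 ?addr0.
  rewrite chi2E ?oppr_eq0 ?oner_eq0 // card_Fp // /pstar.
  rewrite -[(-1 : 'F_p) ^+ _]signr_odd -[(-1 : algC) ^+ _]signr_odd.
  by case: odd; rewrite ?expr1 ?expr0 ?eqxx // (negbTE (oppr1_neq1 oddFp)).
by move=> t t1; rewrite addrC addr_eq0 (negbTE t1) mulr0.
Qed.

Lemma sum_psi_sqr_invariant (N : 'F_p -> algC) :
  (forall t, N t \in Crat) -> (forall d t, d != 0 -> N (d ^+ 2 * t) = N t) ->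
  exists r0 r1, [/\ r0 \in Crat, r1 \in Crat &
    \sum_t psi t * N t = r0 + r1 * gaussFp psi].
Proof.
move=> NQ Nsqr; have [g g0 chi2g] := exists_nonsquare oddFp.
pose al := (N 1 + N g) / 2%:R; pose be := (N 1 - N g) / 2%:R.
have Nt t : t != 0 -> N t = al + be * chi2 t.
  move=> t0; have [ct | ct] := chi2_pm t0; rewrite ct.
  - have := chi2_eq_sqr_class oddFp t0 (oner_neq0 _) (etrans ct (esym (chi2_1 _))).
    case=> z z0 ->.
    by rewrite Nsqr // /al /be; move: (N 1) (N g) => u v; field.
  - have [z z0 ->] := chi2_eq_sqr_class oddFp t0 g0 (etrans ct (esym chi2g)).
    by rewrite Nsqr // /al /be; move: (N 1) (N g) => u v; field.
exists (N 0 - al), be; split.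
- by rewrite rpredB ?NQ // rpred_div ?rpredD ?NQ ?rpred_nat.
- by rewrite rpred_div ?rpredB ?NQ ?rpred_nat.
rewrite (bigD1 0) //= psi0 mul1r.
rewrite (eq_bigr (fun t => psi t * al + be * (psi t * chi2 t))).
  by rewrite big_split /= -mulr_suml -mulr_sumr sum_psi_neq0 mulN1r addrA.
by move=> t t0; rewrite Nt // mulrDr [psi t * (be * _)]mulrCA.
Qed.

Lemma sum_psi_scale_invariant_rat (N : 'F_p -> algC) :
  (forall t, N t \in Crat) -> (forall c t, c != 0 -> N (c * t) = N t) ->
  \sum_t psi t * N t \in Crat.
Proof.
move=> NQ Nscale; rewrite (bigD1 0) //= psi0 mul1r (eq_bigr (fun t => psi t * N 1)).
  by rewrite -mulr_suml sum_psi_neq0 rpredD ?rpredM ?rpredN1 ?NQ.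
by move=> t t0; rewrite -[t]mulr1 Nscale // mulr1.
Qed.

End GaussSum.

Lemma odd_sqr_pred_half (M : nat) :
  odd M -> ((M * M).-1 %/ 2 = M.-1 * ((M + 1) %/ 2))%N.
Proof.
move=> oM; rewrite -(odd_double_half M) oM -mul2n.
have -> : ((1 + 2 * M./2) * (1 + 2 * M./2)).-1 = (2 * (2 * M./2 * M./2 + 2 * M./2))%N.
  by rewrite -subn1; lia.
have -> : (1 + 2 * M./2 + 1 = 2 * (M./2 + 1))%N by ring.
by rewrite !mulKn // add1n /=; ring.
Qed.

Lemma odd_sqr_succ_half (M : nat) : odd M -> ((M * M + 1) %/ 2 = ((M * M).-1 %/ 2).+1)%N.
Proof.
move=> oM; have MM : (0 < M * M)%N by rewrite muln_gt0 andbb odd_gt0.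
by rewrite -[(M * M)%N in LHS](prednK MM) addSn -addnS divnDr // divnn addn1.
Qed.

Lemma odd_succ_half_double (M : nat) : odd M -> (2 * ((M + 1) %/ 2) = M + 1)%N.
Proof. by move=> oM; rewrite mulnC divnK // dvdn2 addn1 /= oM. Qed.

Section PrimeSubfield.
Variables (p : nat) (E : finFieldType).
Hypotheses (pr : prime p) (chE : p \in [pchar E]).

Lemma card_fdeg : #|E| = (p ^ fdeg E p)%N.
Proof. exact: card_pprimeChar chE. Qed.

Definition iotaF (k : 'F_p) : E := (k : nat)%:R.

Lemma iotaF_nat m : iotaF m%:R = m%:R.
Proof. by rewrite /iotaF val_Fp_nat // (GRing.natr_mod_pchar chE). Qed.

Lemma iotaFD a b : iotaF (a + b) = iotaF a + iotaF b.
Proof. by rewrite -[a]natr_Zp -[b]natr_Zp -natrD !iotaF_nat natrD. Qed.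

Fact iotaF_is_zmod_morphism : zmod_morphism iotaF.
Proof. by move=> a b; apply: (addIr (iotaF b)); rewrite -iotaFD !subrK. Qed.

Fact iotaF_is_monoid_morphism : monoid_morphism iotaF.
Proof.
split=> [|a b]; first by rewrite -[1]/(1%:R) iotaF_nat.
by rewrite -[a]natr_Zp -[b]natr_Zp -natrM !iotaF_nat natrM.
Qed.

HB.instance Definition _ := GRing.isZmodMorphism.Build 'F_p E iotaF
  iotaF_is_zmod_morphism.
HB.instance Definition _ := GRing.isMonoidMorphism.Build 'F_p E iotaF
  iotaF_is_monoid_morphism.

Lemma iotaF_frobn c m : iotaF c ^+ (p ^ m) = iotaF c.
Proof.
elim: m => [|m IH]; rewrite ?expr1 // expnSr exprM IH.
exact: (GRing.pFrobenius_aut_nat chE).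
Qed.

Lemma iotaF_expf_pred c m : c != 0 -> iotaF c ^+ (p ^ m).-1 = 1.
Proof.
move=> c0; have ic0 : iotaF c != 0 by rewrite fmorph_eq0.
apply: (mulIf ic0); rewrite mul1r -exprSr.
by rewrite prednK ?expn_gt0 ?prime_gt0 // iotaF_frobn.
Qed.

Lemma trE_iotaFM c y : trE p (iotaF c * y) = iotaF c * trE p y.
Proof.
by rewrite /trE mulr_sumr; apply: eq_bigr => i _; rewrite exprMn iotaF_frobn.
Qed.

Lemma trFpE k y : iotaF k = trE p y -> trFp p y = k.
Proof.
move=> ky; rewrite /trFp; case: pickP => [k' /eqP k'y | /(_ k)].
  by apply: (fmorph_inj iotaF); exact: etrans k'y (esym ky).
by rewrite -ky eqxx.
Qed.

(* Tr(y) always lies in the prime field, but this case spares us proving it. *)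
Lemma trFp_default y : (forall k, iotaF k != trE p y) -> trFp p y = 0.
Proof. by move=> ny; rewrite /trFp; case: pickP => // k; rewrite (negbTE (ny k)). Qed.

Lemma trFp_iotaFM c y : c != 0 -> trFp p (iotaF c * y) = c * trFp p y.
Proof.
move=> c0; have [k ky | ny] := pickP (fun k => iotaF k == trE p y).
  rewrite (trFpE (eqP ky)); apply: trFpE.
  by rewrite rmorphM /= trE_iotaFM (eqP ky).
rewrite [trFp p y]trFp_default => [|k]; last exact/negbT/ny.
rewrite trFp_default ?mulr0 // => k; apply: contraFneq (ny (c^-1 * k)) => ky.
by rewrite rmorphM fmorphV /= ky trE_iotaFM mulKf ?fmorph_eq0.
Qed.

End PrimeSubfield.

Arguments iotaF : clear implicits.

Section OddCharacteristic.
Variables (p : nat) (E : finFieldType).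
Hypotheses (pr : prime p) (oddp : odd p) (chE : p \in [pchar E]).

Let oddpX m : odd (p ^ m). Proof. by rewrite oddX oddp orbT. Qed.

Lemma odd_card_pchar : odd #|E|.
Proof. by rewrite (card_fdeg chE) oddpX. Qed.

Lemma iotaF_sqr_expf_half d m :
  iotaF p E (d ^+ 2) ^+ ((p ^ m + 1) %/ 2) = iotaF p E (d ^+ 2).
Proof.
rewrite rmorphXn /= -exprM odd_succ_half_double // exprD expr1.
by rewrite iotaF_frobn // expr2.
Qed.

Lemma iotaF_expf_sqr_succ_half c m : c != 0 ->
  iotaF p E c ^+ ((p ^ m * p ^ m + 1) %/ 2) = iotaF p E c.
Proof.
move=> c0; rewrite odd_sqr_succ_half ?oddM ?oddpX // exprS odd_sqr_pred_half //.
by rewrite exprM iotaF_expf_pred // expr1n mulr1.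
Qed.

Lemma iotaF_sqr_of_even_fdeg c : c != 0 -> ~~ odd (fdeg E p) ->
  exists2 y : E, y != 0 & iotaF p E c = y ^+ 2.
Proof.
move=> c0 even_deg; apply: chi2_eq1_sqr.
rewrite chi2E ?odd_card_pchar ?fmorph_eq0 // (card_fdeg chE).
rewrite -(odd_double_half (fdeg E p)) (negbTE even_deg) add0n -addnn expnD.
by rewrite odd_sqr_pred_half // exprM iotaF_expf_pred // expr1n eqxx.
Qed.

End OddCharacteristic.

Section TraceFibers.
Variables (p : nat) (E : finFieldType) (q n : nat) (a : nat -> E).
Hypotheses (pr : prime p) (chE : p \in [pchar E]).

Definition trace_ftilde (x : E) : 'F_p := trFp p (ftilde q n a x).

Definition fiber_sum (w : E -> algC) (t : 'F_p) : algC :=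
  \sum_(x | trace_ftilde x == t) w x.

Lemma ftilde_scale (c x : E) : (forall i, c ^+ ((q ^ i + 1) %/ 2) = c) ->
  ftilde q n a (c * x) = c * ftilde q n a x.
Proof.
move=> cq; rewrite /ftilde mulr_sumr; apply: eq_bigr => i _.
by rewrite exprMn cq mulrCA.
Qed.

Lemma sum_psiE_ftilde (psi : 'F_p -> algC) (w : E -> algC) :
  \sum_x psiE psi (ftilde q n a x) * w x = \sum_t psi t * fiber_sum w t.
Proof.
rewrite (partition_big trace_ftilde xpredT) //=; apply: eq_bigr => t _.
by rewrite /fiber_sum mulr_sumr; apply: eq_bigr => x /eqP <-.
Qed.

Lemma fiber_sum_rat w t : (forall x, w x \in Crat) -> fiber_sum w t \in Crat.
Proof. by move=> wQ; apply: rpred_sum. Qed.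

Lemma fiber_sum_scale w c t : c != 0 ->
    (forall i, iotaF p E c ^+ ((q ^ i + 1) %/ 2) = iotaF p E c) ->
    (forall x, w (iotaF p E c * x) = w x) ->
  fiber_sum w (c * t) = fiber_sum w t.
Proof.
move=> c0 cq wc; have ic0 : iotaF p E c != 0 by rewrite fmorph_eq0.
rewrite /fiber_sum (reindex_inj (mulfI ic0)) /=.
apply: eq_big => [x | x _]; last exact: wc.
by rewrite /trace_ftilde ftilde_scale // trFp_iotaFM // (inj_eq (mulfI c0)).
Qed.

End TraceFibers.

Lemma sub_expf_card (F : finFieldType) (S : {set F}) :
  0 \in S -> {in S &, forall x y, x * y \in S} ->
  {in S, forall s, s ^+ #|S| = s}.
Proof.
move=> S0 SM s sS; have [->|s0] := eqVneq s 0.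
  have S_gt0 : (0 < #|S|)%N by apply/card_gt0P; exists 0.
  by rewrite expr0n eqn0Ngt S_gt0.
pose S' := S :\ 0.
have sS' : [set s * y | y in S'] = S'.
  apply/eqP; rewrite eqEcard card_imset; last exact: mulfI.
  rewrite leqnn andbT; apply/subsetP => _ /imsetP [y yS ->].
  by move: yS; rewrite !inE => /andP [y0 yS]; rewrite mulf_neq0 // SM.
have P0 : \prod_(y in S') y != 0.
  by apply/prodf_neq0 => y; rewrite !inE => /andP [].
have sS'1 : s ^+ #|S'| = 1.
  apply: (mulIf P0); rewrite mul1r -prodr_const -big_split /=.
  by rewrite -[in RHS]sS' big_imset //= => x y _ _; apply: mulfI.
by rewrite (cardsD1 0 S) S0 exprS sS'1 mulr1.
Qed.

Lemma subfield_size_dvd_fdeg (p : nat) (E : finFieldType) k :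
    prime p -> p \in [pchar E] ->
  (0 < k)%N -> has_subfield_of_size E (p ^ k) -> (k %| fdeg E p)%N.
Proof.
move=> pr chE k0 [S [cardS S0 _ _ SM]]; set d := fdeg E p; set g := gcdn k d.
have iter_frob (x : E) m t : x ^+ (p ^ m) = x -> x ^+ (p ^ (m * t)) = x.
  move=> xm; elim: t => [|t IH]; rewrite ?muln0 ?expr1 //.
  by rewrite mulnS expnD exprM xm IH.
have frob_g : {in S, forall s, s ^+ (p ^ g) = s}.
  move=> s sS; have [u v ugv _] := egcdnP d k0.
  have sk : s ^+ (p ^ k) = s by rewrite -cardS sub_expf_card.
  have sd : s ^+ (p ^ d) = s by rewrite -(card_fdeg chE) expf_card.
  by rewrite -[RHS](iter_frob _ _ u sk) mulnC ugv expnD exprM mulnC iter_frob.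
have pg1 : (1 < p ^ g)%N.
  by rewrite -{1}(expn0 p) ltn_exp2l ?prime_gt1 ?gcdn_gt0 ?k0.
pose P : {poly E} := 'X^(p ^ g) - 'X.
have sizeP : size P = (p ^ g).+1.
  by rewrite size_polyDl size_polyXn // size_polyN size_polyX ltnS.
have P0 : P != 0 by rewrite -size_poly_eq0 sizeP.
have := max_poly_roots P0 (rs := enum S) _ (enum_uniq _).
rewrite -cardE cardS sizeP ltnS leq_exp2l ?prime_gt1 // => kg.
have /eqP gk : g == k.
  rewrite eqn_leq dvdn_leq ?dvdn_gcdl //= kg //.
  apply/allP => x; rewrite mem_enum => xS.
  by rewrite rootE !hornerE frob_g // subrr.
by rewrite -gk dvdn_gcdr.
Qed.

Definition in_Qspan (G z : algC) : Prop :=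
  exists r0 r1, [/\ r0 \in Crat, r1 \in Crat & z = r0 + r1 * G].

Lemma pstar_rat p : pstar p \in Crat.
Proof. by rewrite rpredM ?rpredX ?rpredN ?rpred1 ?rpred_nat. Qed.

Lemma pstar_neq0 p : prime p -> pstar p != 0.
Proof. by move=> pr; rewrite mulf_neq0 ?signr_eq0 // pnatr_eq0 -lt0n prime_gt0. Qed.

Section QuadraticField.
Variables (p : nat) (G : algC).
Hypotheses (G2 : G ^+ 2 = pstar p) (pstar0 : pstar p != 0).

Lemma in_Qspan_inQuadK z : in_Qspan G z -> inQuadK p z.
Proof.
move=> [r0 [r1 [/CratP [b0 ->] /CratP [b1 ->] ->]]].
have s2 : sqrtC (pstar p) ^+ 2 = pstar p := sqrtCK _.
have : (G - sqrtC (pstar p)) * (G + sqrtC (pstar p)) == 0.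
  by rewrite -subr_sqr G2 s2 subrr.
rewrite mulf_eq0 subr_eq0 addr_eq0 => /orP [] /eqP ->.
  by exists b0, b1.
by exists b0, (- b1); rewrite rmorphN mulrN mulNr.
Qed.

Lemma in_Qspan_mull c z : c \in Crat -> in_Qspan G z -> in_Qspan G (c * z).
Proof.
move=> cQ [r0 [r1 [r0Q r1Q ->]]]; exists (c * r0), (c * r1).
by rewrite !rpredM // mulrDr mulrA.
Qed.

Lemma in_Qspan_divl z : in_Qspan G z -> in_Qspan G (G^-1 * z).
Proof.
have G0 : G != 0 by apply: contraNneq pstar0 => G0; rewrite -G2 G0 expr0n.
move=> [r0 [r1 [r0Q r1Q ->]]]; exists r1, (r0 / pstar p).
rewrite rpred_div ?pstar_rat //; split=> //.
by rewrite -G2; field.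
Qed.

Lemma in_Qspan_expVl m z : in_Qspan G z -> in_Qspan G ((G ^+ m)^-1 * z).
Proof.
move=> zG; elim: m => [|m IH]; first by rewrite expr0 invr1 mul1r.
by rewrite exprS invfM -mulrA; apply: in_Qspan_divl.
Qed.

Lemma gauss_normalizer_rat m r :
  ~~ odd m -> r \in Crat -> - (G ^+ m)^-1 * r \in Crat.
Proof.
move=> evm rQ; rewrite -(odd_double_half m) (negbTE evm) add0n -mul2n exprM G2.
by rewrite rpredM ?rpredN ?rpredV ?rpredX ?pstar_rat.
Qed.

End QuadraticField.

Definition Sweighted (E : finFieldType) (p q n : nat) (a : nat -> E)
    (psi : 'F_p -> algC) (w : E -> algC) : algC :=
  - (gaussFp psi ^+ fdeg E p)^-1 * \sum_(x : E) psiE psi (ftilde q n a x) * w x.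

Section WeightedSumDefs.
Variables (E : finFieldType) (p q n : nat) (a : nat -> E) (psi : 'F_p -> algC).

Lemma Splus_Sweighted :
  Splus q n a psi = Sweighted q n a psi (fun=> 1).
Proof. by rewrite /Sweighted; under eq_bigr do rewrite mulr1. Qed.

Lemma Sminus_Sweighted :
  Sminus q n a psi = Sweighted q n a psi (@chi2 E).
Proof. by []. Qed.

Lemma Sweighted_eq0 w : psi =1 (fun=> 0) -> Sweighted q n a psi w = 0.
Proof.
by move=> psi_0; rewrite /Sweighted big1 ?mulr0 // => x _; rewrite /psiE psi_0 mul0r.
Qed.

End WeightedSumDefs.

Lemma add_char_zero_or_one (p : nat) (psi : 'F_p -> algC) :
  (forall x y, psi (x + y) = psi x * psi y) -> psi 0 = 1 \/ psi =1 (fun=> 0).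
Proof.
move=> psiD; have [psi0 | psi0] := eqVneq (psi 0) 0.
  by right=> x; rewrite -[x]addr0 psiD psi0 mulr0.
by left; apply: (mulfI psi0); rewrite -psiD addr0 mulr1.
Qed.

Section WeightedSums.
Variables (p : nat) (E : finFieldType) (k n : nat) (a : nat -> E).
Variable psi : 'F_p -> algC.
Hypotheses (pr : prime p) (oddp : odd p) (chE : p \in [pchar E]).
Hypotheses (psiD : forall x y, psi (x + y) = psi x * psi y) (psi0 : psi 0 = 1).
Variable x0 : 'F_p.
Hypothesis psix0 : psi x0 != 1.
Variable w : E -> algC.
Hypothesis wQ : forall x, w x \in Crat.

Let G2 : gaussFp psi ^+ 2 = pstar p := gaussFp_sqr pr oddp psiD psi0 psix0.

Lemma Sweighted_inQuadK :
  (forall d x, d != 0 -> w (iotaF p E (d ^+ 2) * x) = w x) ->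
  inQuadK p (Sweighted (p ^ k) n a psi w).
Proof.
move=> wsqr; rewrite /Sweighted sum_psiE_ftilde.
have [|d t d0|r0 [r1 [r0Q r1Q ->]]] :=
  sum_psi_sqr_invariant pr oddp psiD psi0 psix0 (N := fiber_sum (p ^ k) n a w).
- by move=> t; apply: fiber_sum_rat.
- apply: fiber_sum_scale => // [||x]; rewrite ?expf_neq0 //.
  + by move=> i; rewrite -expnM iotaF_sqr_expf_half.
  + exact: wsqr.
apply: (in_Qspan_inQuadK G2); rewrite mulNr -mulN1r.
apply: in_Qspan_mull; first exact: rpredN1.
apply: (in_Qspan_expVl G2 (pstar_neq0 pr)).
by exists r0, r1.
Qed.

Lemma Sweighted_rat : ~~ odd k -> ~~ odd (fdeg E p) ->
  (forall c x, c != 0 -> w (iotaF p E c * x) = w x) ->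
  Sweighted (p ^ k) n a psi w \in Crat.
Proof.
move=> evk evdeg wscale; rewrite /Sweighted sum_psiE_ftilde.
apply: (gauss_normalizer_rat G2) => //.
apply: (sum_psi_scale_invariant_rat psiD psi0 psix0) => [t | c t c0].
  exact: fiber_sum_rat.
apply: fiber_sum_scale => // [i | x]; last exact: wscale.
have -> : ((p ^ k) ^ i = p ^ (k./2 * i) * p ^ (k./2 * i))%N.
  by rewrite -expnM -expnD -mulnDl addnn -[in LHS](even_halfK evk).
exact: iotaF_expf_sqr_succ_half.
Qed.

End WeightedSums.

Theorem mainTheorem12 (p : nat) (E : finFieldType) (k n : nat) (a : nat -> E)
    (psi : 'F_p -> algC) :
  prime p -> odd p -> p \in [pchar E] -> (0 < k)%N ->
  nontriv_add_char psi ->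
  let q := (p ^ k)%N in
  inQuadK p (@Splus E p q n a psi) /\ inQuadK p (@Sminus E p q n a psi) /\
  ((exists r : nat, q = (r ^ 2)%N) -> has_subfield_of_size E q ->
     @Splus E p q n a psi \in Crat /\ @Sminus E p q n a psi \in Crat).
Proof.
move=> pr oddp chE k0 [psiD [x0 psix0]] q.
rewrite /q Splus_Sweighted Sminus_Sweighted.
have [psi0 | psi_0] := add_char_zero_or_one psiD; last first.
  have K0 : inQuadK p 0 by exists 0, 0; rewrite !rmorph0 mul0r addr0.
  by rewrite !Sweighted_eq0 // rpred0.
have oddE := odd_card_pchar oddp chE.
have SK := Sweighted_inQuadK k n a pr oddp chE psiD psi0 psix0.
have SQ := Sweighted_rat n a pr oddp chE psiD psi0 psix0.
split; [|split].
- by apply: SK => // x; rewrite rpred1.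
- apply: SK => [x | d x d0]; first exact: chi2_rat.
  by rewrite rmorphXn /= chi2_sqrM ?fmorph_eq0.
move=> [r qr] subq; have kdeg := subfield_size_dvd_fdeg pr chE k0 subq.
have evk : ~~ odd k.
  move/(congr1 (logn p)): qr; rewrite pfactorK // lognX => ->.
  by rewrite oddM andFb.
have evdeg : ~~ odd (fdeg E p) by rewrite -dvdn2 (dvdn_trans _ kdeg) // dvdn2.
split; apply: SQ => // [x | c x c0]; rewrite ?rpred1 ?chi2_rat //.
have [y y0 ->] := iotaF_sqr_of_even_fdeg pr oddp chE c0 evdeg.
exact: chi2_sqrM.
Qed.
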